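(* Let $(G,q)$ be a pointed graph and $k\ge 0$ an integer. (1) For every oriented $k$-spanning tree $\mathcal T$ of $(G,q)$, the divisor $D_{\mathcal T}$ is $q$-reduced. (2) For every $q$-reduced divisor $D$ with $D(q)=-1$ and $\deg(D)=k-1$, there exists an oriented $k$-spanning tree $\mathcal T$ of $(G,q)$ with $D_{\mathcal T}\sim D$.
   Context: $G$ is a finite connected multigraph without loops with $n$ vertices, $q\in V(G)$. $\mathbb E(G)$ is the set of oriented edges (each edge gives two opposite oriented edges $e,\bar e$, with head $e_+$ and tail $e_-$). For a set $\mathcal P\subseteq\mathbb E(G)$, $\mathrm{indeg}_{\mathcal P}(v)=|\{e\in\mathcal P:e_+=v\}|$ and $D_{\mathcal P}=\sum_v(\mathrm{indeg}_{\mathcal P}(v)-1)(v)$. An oriented $k$-spanning tree of $(G,q)$ is a subset $\mathcal T\subseteq\mathbb E(G)$ with $|\mathcal T|=n-1+k$ such that the directed graph $(V(G),\mathcal T)$ has no directed cycle, $\mathrm{indeg}_{\mathcal T}(q)=0$, and $\mathrm{indeg}_{\mathcal T}(v)\ge1$ for all $v\neq q$ (so $q$ is its unique source). A divisor is an integer combination $D=\sum_v D(v)(v)$ of vertices, $\deg D=\sum_v D(v)$. $D$ is $q$-reduced if $D(v)\ge 0$ for all $v\ne q$ and for every nonempty $A\subseteq V(G)\setminus\{q\}$ there is $v\in A$ such that $D(v)$ is less than the number of edges joining $v$ to vertices outside $A$. Linear equivalence: $D_1\sim D_2$ iff $D_2=D_1-\Delta(f)$ for some $f:V(G)\to\mathbb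 Z$, where $\Delta(f)=\sum_v\sum_{\{v,w\}\in E(G)}(f(v)-f(w))(v)$. *)

From HB Require Import structures.
From mathcomp Require Import all_boot all_order all_algebra.
Set Implicit Arguments. Unset Strict Implicit. Unset Printing Implicit Defensive.
Import Order.TTheory GRing.Theory Num.Theory.
Local Open Scope ring_scope.

(* A finite multigraph G: vertex type V, edge type E; each edge e joins
   src e and tgt e (an arbitrary reference orientation, used only to
   name the two oriented versions of e). *)
Section Graph.
Variables (V E : finType) (src tgt : E -> V).

Definition loopless : Prop := forall e : E, src e != tgt e.

Definition incident (v : V) (e : E) : bool := (src e == v) || (tgt e == v).

Definition other (v : V) (e : E) : V := if src e == v then tgt e else src e.

Definition adj : rel V :=
  fun v w => [exists e : E, ((src e == v) && (tgt e == w)) || ((src e == w) && (tgt e == v))].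
Definition connected_graph : Prop := forall v w : V, connect adj v w.

(* oriented edges: (e, true) goes src e -> tgt e, (e, false) is its opposite *)
Definition ohead (x : E * bool) : V := if x.2 then tgt x.1 else src x.1.
Definition otail (x : E * bool) : V := if x.2 then src x.1 else tgt x.1.

Definition indeg (P : {set E * bool}) (v : V) : nat :=
  #|[set x in P | ohead x == v]|.

Definition div_of (P : {set E * bool}) : V -> int :=
  fun v => (indeg P v)%:Z - 1.

Definition deg (D : V -> int) : int := \sum_(v : V) D v.

Definition darc (P : {set E * bool}) : rel V :=
  fun v w => [exists x in P, (otail x == v) && (ohead x == w)].
Definition dacyclic (P : {set E * bool}) : Prop :=
  forall v w : V, darc P v w -> ~~ connect (darc P) w v.

Definition oriented_kst (q : V) (k : nat) (T : {set E * bool}) : Prop :=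
  [/\ #|T| = (#|V| - 1 + k)%N,
      dacyclic T,
      indeg T q = 0%N &
      forall v : V, v != q -> (1 <= indeg T v)%N].

Definition out_edges (A : {set V}) (v : V) : nat :=
  #|[set e : E | incident v e && (other v e \notin A)]|.

Definition q_reduced (q : V) (D : V -> int) : Prop :=
  (forall v : V, v != q -> 0 <= D v) /\
  (forall A : {set V}, A != set0 -> q \notin A ->
     exists2 v, v \in A & D v < (out_edges A v)%:Z).

Definition laplacian (f : V -> int) : V -> int :=
  fun v => \sum_(e : E | incident v e) (f v - f (other v e)).

Definition lin_equiv (D1 D2 : V -> int) : Prop :=
  exists f : V -> int, forall v : V, D2 v = D1 v - laplacian f v.

End Graph.

(* (1) In an acyclic orientation, every nonempty set A of non-root vertices has
   a vertex v with no incoming arc from inside A, so all the arcs into v cross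
   the boundary of A and D_T(v) = indeg(v) - 1 < outdeg_A(v).
   (2) Conversely, a q-reduced divisor drives a burning process: starting from
   B = {q}, reducedness of D at the complement of B yields a vertex v outside B
   joined to B by more than D(v) edges; orient D(v) + 1 of them towards v and
   add v to B. Each new vertex gets a rank larger than all previous ones, so
   the arcs increase the rank and the resulting orientation is acyclic, with
   D_T = D exactly. *)
From Pilot Require Import Defs.
From HB Require Import structures.
From mathcomp Require Import all_boot all_order all_algebra.
From mathcomp Require Import zify.
Set Implicit Arguments. Unset Strict Implicit. Unset Printing Implicit Defensive.
Import Order.TTheory GRing.Theory Num.Theory.
Local Open Scope ring_scope.

Section AcyclicRelation.
Variables (T : finType) (e : rel T).

Lemma acyclic_of_rank (r : T -> nat) : (forall v w, e v w -> (r v < r w)%N) ->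
  forall v w, e v w -> ~~ connect e w v.
Proof.
move=> r_incr v w evw; have r_mono a b : connect e a b -> (r a <= r b)%N.
  move=> /connectP[p + ->] {b}; elim: p a => //= c p IH a /andP[eac pc].
  exact: leq_trans (ltnW (r_incr _ _ eac)) (IH _ pc).
by apply/negP => /r_mono; rewrite leqNgt r_incr.
Qed.

Hypothesis e_acyclic : forall v w, e v w -> ~~ connect e w v.

Lemma acyclic_exists_minimal (A : {set T}) : A != set0 ->
  exists2 v, v \in A & forall u, u \in A -> ~~ e u v.
Proof.
case/set0Pn=> v0 v0A; pose preds v := [set u in A | connect e u v].
have [v vA0 v_min] := arg_minnP (fun v => #|preds v|) v0A.
have vA : v \in A := vA0.
exists v => // u uA; apply/negP => euv.
have: preds u \proper preds v.
  apply/properP; split.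
    apply/subsetP => w; rewrite !inE => /andP[-> /= cwu].
    exact: connect_trans cwu (connect1 euv).
  by exists v; rewrite !inE vA ?connect0 // e_acyclic.
by move/proper_card; rewrite ltnNge v_min.
Qed.

End AcyclicRelation.

Section OrientedSpanningTrees.
Variables (V E : finType) (src tgt : E -> V).
Hypothesis no_loop : loopless src tgt.

Local Notation oh := (Defs.ohead src tgt).
Local Notation ot := (otail src tgt).
Local Notation indeg := (indeg src tgt).
Local Notation out_edges := (out_edges src tgt).

Lemma incident_ohead x : incident src tgt (oh x) x.1.
Proof. by case: x => e [] /=; rewrite /incident /Defs.ohead /= eqxx ?orbT. Qed.

Lemma other_ohead x : other src tgt (oh x) x.1 = ot x.
Proof.
case: x => e [] /=; rewrite /other /Defs.ohead /otail /= ?eqxx //.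
by rewrite (negbTE (no_loop e)).
Qed.

Lemma ohead_inj x y : x.1 = y.1 -> oh x = oh y -> x = y.
Proof.
case: x y => e b [e' b'] /= <-; rewrite /Defs.ohead /=.
by case: b b' => -[] //= tgt_src; have := no_loop e; rewrite tgt_src eqxx.
Qed.

Lemma indeg_le_out_edges (T : {set E * bool}) (A : {set V}) v :
  (forall x, x \in T -> oh x = v -> ot x \notin A) ->
  (indeg T v <= out_edges A v)%N.
Proof.
move=> tails_out; rewrite /Defs.indeg /Defs.out_edges -(card_in_imset (f := fst)).
  apply/subset_leq_card/subsetP => _ /imsetP[x /[!inE] /andP[xT /eqP xv] ->].
  by rewrite -xv incident_ohead other_ohead tails_out.
move=> x y /[!inE] /andP[_ /eqP xv] /andP[_ /eqP yv] xy.
by apply: ohead_inj; rewrite ?xv ?yv.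
Qed.

Lemma kst_div_reduced q k T :
  oriented_kst src tgt q k T -> q_reduced src tgt q (div_of src tgt T).
Proof.
case=> _ T_acyclic _ indeg_pos; split=> [v /indeg_pos | A A_neq0 qNA].
  by rewrite /div_of; lia.
have [v vA v_min] := acyclic_exists_minimal T_acyclic A_neq0.
exists v => //; suff: (indeg T v <= out_edges A v)%N by rewrite /div_of; lia.
apply: indeg_le_out_edges => x xT xv; apply/negP => otA.
by have /negP := v_min _ otA; apply; apply/existsP; exists x; rewrite xT xv !eqxx.
Qed.

Lemma card_eq_sum_indeg (T : {set E * bool}) : #|T| = (\sum_v indeg T v)%N.
Proof.
rewrite -sum1_card (partition_big oh predT) //=.
by apply: eq_bigr => v _; rewrite /Defs.indeg -sum1_card; apply: eq_bigl => x; rewrite inE.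
Qed.

Lemma indegU (T N : {set E * bool}) v : [disjoint T & N] ->
  indeg (T :|: N) v = (indeg T v + indeg N v)%N.
Proof.
move=> TN; rewrite /Defs.indeg -cardsUI.
have -> : [set x in T :|: N | oh x == v] =
          [set x in T | oh x == v] :|: [set x in N | oh x == v].
  by apply/setP => x; rewrite !inE andb_orl.
suff /eqP -> : [set x in T | oh x == v] :&: [set x in N | oh x == v] == set0.
  by rewrite cards0 addn0.
rewrite -subset0; apply/subsetP => x; rewrite !inE => /andP[/andP[xT _] /andP[xN _]].
by rewrite (disjointFr TN xT) in xN.
Qed.

Lemma indeg_eq0 (T : {set E * bool}) v :
  (forall x, x \in T -> oh x != v) -> indeg T v = 0%N.
Proof.
move=> heads_neq; apply/eqP; rewrite cards_eq0; apply/eqP/setP => x; rewrite !inE.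
by apply/negbTE/andP => -[/heads_neq/negPf ->].
Qed.

Lemma indeg_all (T : {set E * bool}) v :
  (forall x, x \in T -> oh x = v) -> indeg T v = #|T|.
Proof.
by move=> heads_eq; apply: eq_card => x; rewrite inE andb_idr // => /heads_eq->.
Qed.

(* A stage of the burning process: the burnt set B, the arcs T chosen so far,
   all inside B, and a ranking r of B increasing along the arcs. *)
Definition partial_tree q D (B : {set V}) (T : {set E * bool}) (r : V -> nat) :=
  [/\ q \in B,
      forall x, x \in T ->
        [/\ oh x \in B, ot x \in B, oh x != q & (r (ot x) < r (oh x))%N],
      forall v, v \in B -> (r v < #|B|)%N &
      forall v, v \in B -> v != q -> (indeg T v)%:Z = D v + 1].

Definition orient_into (v : V) (e : E) : E * bool := (e, tgt e == v).

Lemma orient_into_head v e : incident src tgt v e -> oh (orient_into v e) = v.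
Proof.
rewrite /incident /orient_into /Defs.ohead /=.
by case: (tgt e =P v) => //= _ /orP[/eqP|/eqP].
Qed.

Lemma orient_into_tail v e :
  incident src tgt v e -> ot (orient_into v e) = other src tgt v e.
Proof.
rewrite /incident /orient_into /otail /other /=.
case: (tgt e =P v) => [<-|_ /orP[/eqP ->|//]]; last by rewrite eqxx.
by rewrite (negbTE (no_loop e)).
Qed.

Lemma exists_arcs_into (B : {set V}) v n : (n <= out_edges (~: B) v)%N ->
  exists N : {set E * bool},
    #|N| = n /\ forall x, x \in N -> oh x = v /\ ot x \in B.
Proof.
case/card_geqP=> s [s_uniq s_size s_out].
exists [set orient_into v e | e in s]; split.
  by rewrite card_imset -?s_size; [apply/card_uniqP | move=> e1 e2 []].
move=> _ /imsetP[e /s_out /[!inE] /andP[ve /negPn e_out] ->].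
by rewrite orient_into_head // orient_into_tail.
Qed.

Lemma partial_tree_extend q D B T r : q_reduced src tgt q D ->
  partial_tree q D B T r -> B != setT ->
  exists B' T' r', partial_tree q D B' T' r' /\ (#|B| < #|B'|)%N.
Proof.
case=> D_ge0 D_red [qB T_in r_lt indegT] B_neqT.
have CB_neq0 : ~: B != set0 by apply: contra B_neqT; rewrite -setCT => /eqP/setC_inj ->.
have [v vNB lt_out] : exists2 v, v \in ~: B & D v < (out_edges (~: B) v)%:Z.
  by apply: D_red CB_neq0 _; rewrite inE qB.
rewrite inE in vNB; have vq : v != q by apply: contraNneq vNB => ->.
have enough_edges : (`|D v|.+1 <= out_edges (~: B) v)%N.
  by move: lt_out (D_ge0 _ vq); lia.
have [N [N_card N_in]] := exists_arcs_into enough_edges.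
have TN : [disjoint T & N].
  apply/pred0P => x /=; apply/andP => -[/T_in[ohB _ _ _] /N_in[xv _]].
  by move: ohB; rewrite xv; apply/negP.
have indegN w : indeg N w = if w == v then #|N| else 0%N.
  case: eqP => [->|/eqP wv]; first by apply: indeg_all => x /N_in[].
  by apply: indeg_eq0 => x /N_in[-> _]; rewrite eq_sym.
have indegTv : indeg T v = 0%N.
  by apply: indeg_eq0 => x /T_in[ohB _ _ _]; apply: contraNneq vNB => <-.
exists (v |: B), (T :|: N), (fun w => if w == v then #|B| else r w).
split; last by rewrite cardsU1 vNB.
split=> [|x|w|w]; rewrite ?inE ?cardsU1 ?vNB.
- by rewrite qB orbT.
- case/orP=> [/T_in[ohB otB ohq r_ot]|/N_in[-> otB]].
    by rewrite ohB otB !orbT !ifN ?(memPn vNB).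
  by rewrite eqxx otB vq orbT ifN ?(memPn vNB) ?r_lt.
- by case: eqP => //= _ /r_lt; lia.
- rewrite indegU // indegN; case: eqP => [-> _ _|_ /= wB wq].
    by rewrite indegTv N_card; move: (D_ge0 _ vq); lia.
  by rewrite addn0 indegT.
Qed.

Lemma partial_tree_exists q D : q_reduced src tgt q D ->
  exists T r, partial_tree q D setT T r.
Proof.
move=> D_red; suff grow m : (m <= #|V|)%N ->
    exists B T r, partial_tree q D B T r /\ (m <= #|B|)%N.
  have [B [T [r [tree_B V_le_B]]]] := grow _ (leqnn _).
  exists T, r; suff <- : B = setT by [].
  by apply/eqP; rewrite eqEcard subsetT cardsT.
elim: m => [_|m IH m_lt].
  exists [set q], set0, (fun _ => 0%N); split=> //; split=> [||v|v].
  - by rewrite inE.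
  - by move=> x; rewrite in_set0.
  - by rewrite cards1.
  - by rewrite inE => /eqP ->; rewrite eqxx.
have [B [T [r [tree_B m_le_B]]]] := IH (ltnW m_lt).
have [lt_m_B|le_B_m] := ltnP m #|B|; first by exists B, T, r.
have B_neqT : B != setT.
  by apply: contraTneq m_lt => B_T; move: le_B_m; rewrite B_T cardsT leqNgt.
have [B' [T' [r' [tree_B' lt_B_B']]]] := partial_tree_extend D_red tree_B B_neqT.
by exists B', T', r'; split=> //; lia.
Qed.

Lemma spanning_partial_tree_kst q k D T r : q_reduced src tgt q D ->
  D q = -1 -> deg D = k%:Z - 1 -> partial_tree q D setT T r ->
  oriented_kst src tgt q k T /\ div_of src tgt T =1 D.
Proof.
move=> [D_ge0 _] Dq degD [_ T_in _ indegT].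
have indeg_q : indeg T q = 0%N by apply: indeg_eq0 => x /T_in[].
have divD v : div_of src tgt T v = D v.
  rewrite /div_of; have [->|vq] := eqVneq v q; first by rewrite indeg_q Dq.
  by rewrite indegT ?inE // addrK.
have card_T : #|T|%:Z = k%:Z - 1 + #|V|%:Z.
  rewrite -degD /deg -(eq_bigr _ (fun v _ => divD v)) /div_of sumrB sumr_const.
  rewrite card_eq_sum_indeg natz subrK -natz natr_sum.
  by apply: eq_bigr => v _; rewrite natz.
have V_gt0 : (0 < #|V|)%N by apply/card_gt0P; exists q.
split=> //; split=> [||//|v vq].
- by lia.
- apply: (acyclic_of_rank (r := r)) => _ _ /existsP[x /and3P[xT /eqP <- /eqP <-]].
  by case: (T_in _ xT).
- by have := indegT _ (in_setT v) vq; have := D_ge0 _ vq; lia.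
Qed.

End OrientedSpanningTrees.

Theorem mainTheorem2 (V E : finType) (src tgt : E -> V) (q : V) (k : nat) :
  loopless src tgt -> connected_graph src tgt ->
  (forall T : {set E * bool}, oriented_kst src tgt q k T ->
     q_reduced src tgt q (div_of src tgt T))
  /\
  (forall D : V -> int, q_reduced src tgt q D -> D q = -1 -> deg D = k%:Z - 1 ->
     exists T : {set E * bool},
       oriented_kst src tgt q k T /\ lin_equiv src tgt (div_of src tgt T) D).
Proof.
move=> no_loop _; split=> [T|D D_red Dq degD]; first exact: kst_div_reduced.
have [T [r tree_T]] := partial_tree_exists no_loop D_red.
have [T_kst divD] := spanning_partial_tree_kst D_red Dq degD tree_T.
exists T; split=> //; exists (fun _ => 0) => v.
by rewrite divD /laplacian big1 ?subr0 // => e _; rewrite subrr.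
Qed.
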